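(* Consider the following chemical reaction network (the ERK cascade with a negative feedback, in which MEK and ERK share the phosphatase PH) with 25 species RAF, pRAF, MEK, pMEK, ppMEK, ERK, pERK, ppERK, RAS, RAFPH, PH, PH2, RAS-RAF, MEK-pRAF, pMEK-pRAF, ERK-ppMEK, pERK-ppMEK, RAF-RAFPH, ppMEK-PH, pMEK-PH, ppERK-PH, pERK-PH, pRAF-ppERK, Z-PH2, Z and 36 reactions with rate constants $k_1,\dots,k_{36}$: RAF + RAS $\underset{k_2}{\overset{k_1}{\rightleftarrows}}$ RAS-RAF $\overset{k_3}{\to}$ pRAF + RAS; pRAF + RAFPH $\underset{k_5}{\overset{k_4}{\rightleftarrows}}$ RAF-RAFPH $\overset{k_6}{\to}$ RAF + RAFPH; MEK + pRAF $\underset{k_8}{\overset{k_7}{\rightleftarrows}}$ MEK-pRAF $\overset{k_9}{\to}$ pMEK + pRAF $\underset{k_{11}}{\overset{k_{10}}{\rightleftarrows}}$ pMEK-pRAF $\overset{k_{12}}{\to}$ ppMEK + pRAF; ppMEK + PH $\underset{k_{14}}{\overset{k_{13}}{\rightleftarrows}}$ ppMEK-PH $\overset{k_{15}}{\to}$ pMEK + PH $\underset{k_{17}}{\overset{k_{16}}{\rightleftarrows}}$ pMEK-PH $\overset{k_{18}}{\to}$ MEK + PH; ERK + ppMEK $\underset{k_{20}}{\overset{k_{19}}{\rightleftarrows}}$ ERK-ppMEK $\overset{k_{21}}{\to}$ pERK + ppMEK $\underset{k_{23}}{\overset{k_{22}}{\rightleftarrows}}$ pERK-ppMEK $\overset{k_{24}}{\to}$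 ppERK + ppMEK; ppERK + PH $\underset{k_{26}}{\overset{k_{25}}{\rightleftarrows}}$ ppERK-PH $\overset{k_{27}}{\to}$ pERK + PH $\underset{k_{29}}{\overset{k_{28}}{\rightleftarrows}}$ pERK-PH $\overset{k_{30}}{\to}$ ERK + PH; pRAF + ppERK $\underset{k_{32}}{\overset{k_{31}}{\rightleftarrows}}$ pRAF-ppERK $\overset{k_{33}}{\to}$ Z + ppERK; Z + PH2 $\underset{k_{35}}{\overset{k_{34}}{\rightleftarrows}}$ Z-PH2 $\overset{k_{36}}{\to}$ pRAF + PH2. Then for every choice of positive rate constants $k\in\mathbb{R}^{36}_{>0}$, the associated mass-action system has toric steady states; in particular its steady state ideal is a binomial ideal.
   Context: For a reaction network with species concentrations $x=(x_1,\dots,x_s)$ and reactions $y\to y'$ (complexes $y,y'\in\mathbb{Z}_{\ge0}^s$, where a complex is a formal sum of species) with positive rate constants, the mass-action system is $\dot x = f(x;k)=\sum_{\text{reactions } y\to y'} k_{y\to y'}\, x^{y}(y'-y)$, whose components $f_1,\dots,f_s$ are polynomials in $x$. The steady state ideal is $J=\langle f_1,\dots,f_s\rangle\subseteq\mathbb{R}[x_1,\dots,x_s]$. The system has toric steady states if $J$ can be generated by binomials (polynomials with at most two terms) and $J$ admits nonnegative zeros. *)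

From Stdlib Require Import Reals.
From HB Require Import structures.
From mathcomp Require Import all_boot all_order all_algebra.
From mathcomp Require Import mpoly.
From mathcomp Require Import Rstruct.

Set Implicit Arguments.
Unset Strict Implicit.
Unset Printing Implicit Defensive.

Import GRing.Theory Num.Theory.
Local Open Scope ring_scope.

(** A complex is given as a list of species indices (with repetitions),
    e.g. [:: 0; 8] is RAF + RAS. The stoichiometric coefficient of species
    [i] in the complex [c] is [count_mem i c]. *)

Definition cmono (n : nat) (c : seq nat) : {mpoly R[n.+1]} :=
  \prod_(j <- c) 'X_(inord j).

Definition mass_action_f (n m : nat) (rxn : 'I_m -> seq nat * seq nat)
    (k : 'I_m -> R) (i : 'I_n.+1) : {mpoly R[n.+1]} :=
  \sum_(r < m) (k r *: (cmono n (rxn r).1 *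
      (((count_mem (i : nat) (rxn r).2)%:R
        - (count_mem (i : nat) (rxn r).1)%:R) : {mpoly R[n.+1]}))).

Definition in_ideal (n : nat) (I : finType) (g : I -> {mpoly R[n]})
    (p : {mpoly R[n]}) : Prop :=
  exists c : I -> {mpoly R[n]}, p = \sum_(i : I) c i * g i.

Definition is_binomial (n : nat) (p : {mpoly R[n]}) : Prop :=
  (size (msupp p) <= 2)%N.

Definition binomial_ideal (n : nat) (I : finType) (f : I -> {mpoly R[n]}) : Prop :=
  exists (b : nat) (g : 'I_b -> {mpoly R[n]}),
    (forall j, is_binomial (g j)) /\
    (forall p, in_ideal f p <-> in_ideal g p).

Definition admits_nonneg_zero (n : nat) (I : finType) (f : I -> {mpoly R[n]}) : Prop :=
  exists x : 'I_n -> R, (forall i, 0 <= x i) /\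
    (forall p, in_ideal f p -> p.@[x] = 0).

Definition toric_steady_states (n : nat) (I : finType) (f : I -> {mpoly R[n]}) : Prop :=
  binomial_ideal f /\ admits_nonneg_zero f.

(** Species numbering (0-based):
   0 RAF, 1 pRAF, 2 MEK, 3 pMEK, 4 ppMEK, 5 ERK, 6 pERK, 7 ppERK, 8 RAS,
   9 RAFPH, 10 PH, 11 PH2, 12 RAS-RAF, 13 MEK-pRAF, 14 pMEK-pRAF,
   15 ERK-ppMEK, 16 pERK-ppMEK, 17 RAF-RAFPH, 18 ppMEK-PH, 19 pMEK-PH,
   20 ppERK-PH, 21 pERK-PH, 22 pRAF-ppERK, 23 Z-PH2, 24 Z.
  Reaction number r (0-based) has rate constant k_{r+1} of the paper. *)
Definition erk_reactions : seq (seq nat * seq nat) :=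
  [:: ([:: 0; 8], [:: 12]);
      ([:: 12], [:: 0; 8]);
      ([:: 12], [:: 1; 8]);
      ([:: 1; 9], [:: 17]);
      ([:: 17], [:: 1; 9]);
      ([:: 17], [:: 0; 9]);
      ([:: 2; 1], [:: 13]);
      ([:: 13], [:: 2; 1]);
      ([:: 13], [:: 3; 1]);
      ([:: 3; 1], [:: 14]);
      ([:: 14], [:: 3; 1]);
      ([:: 14], [:: 4; 1]);
      ([:: 4; 10], [:: 18]);
      ([:: 18], [:: 4; 10]);
      ([:: 18], [:: 3; 10]);
      ([:: 3; 10], [:: 19]);
      ([:: 19], [:: 3; 10]);
      ([:: 19], [:: 2; 10]);
      ([:: 5; 4], [:: 15]);
      ([:: 15], [:: 5; 4]);
      ([:: 15], [:: 6; 4]);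
      ([:: 6; 4], [:: 16]);
      ([:: 16], [:: 6; 4]);
      ([:: 16], [:: 7; 4]);
      ([:: 7; 10], [:: 20]);
      ([:: 20], [:: 7; 10]);
      ([:: 20], [:: 6; 10]);
      ([:: 6; 10], [:: 21]);
      ([:: 21], [:: 6; 10]);
      ([:: 21], [:: 5; 10]);
      ([:: 1; 7], [:: 22]);
      ([:: 22], [:: 1; 7]);
      ([:: 22], [:: 24; 7]);
      ([:: 24; 11], [:: 23]);
      ([:: 23], [:: 24; 11]);
      ([:: 23], [:: 1; 11])
  ].

Definition erk_rxn (r : 'I_36) : seq nat * seq nat :=
  nth ([::], [::]) erk_reactions r.

Definition erk_f (k : 'I_36 -> R) : 'I_25 -> {mpoly R[25]} :=
  mass_action_f erk_rxn k.

From Stdlib Require Import Reals.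
From HB Require Import structures.
From mathcomp Require Import all_boot all_order all_algebra.
From mathcomp Require Import mpoly.
From mathcomp Require Import Rstruct.

Set Implicit Arguments.
Unset Strict Implicit.
Unset Printing Implicit Defensive.

Import GRing.Theory.
Local Open Scope ring_scope.

(* Every mass-action polynomial f_i is an integer combination of the reaction
   rates v_r = k_r x^(y_r), and so are the eighteen binomials used here: for
   each intermediate complex C, formed by reaction a and consumed by reactions
   a+1 and a+2 (both with source C), the binomial
   v_a - v_(a+1) - v_(a+2) = k_a x^y - (k_(a+1) + k_(a+2)) x_C,
   and six differences v_a - v_b of consumption rates of two intermediates.
   The f_i and the binomials generate the same ideal because their integer
   coefficient matrices factor through each other, a finite computation.
   Every reaction has a nonempty source complex, so the origin is a
   nonnegative zero of the ideal. *)

Section Ideals.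
Variables (n : nat) (I : finType) (f : I -> {mpoly R[n]}).

Lemma in_ideal_gen i : in_ideal f (f i).
Proof.
exists (fun j => (j == i)%:R); rewrite (bigD1 i) //= eqxx mul1r big1 ?addr0 //.
by move=> j /negPf ->; rewrite mul0r.
Qed.

Lemma in_ideal_trans (J : finType) (g : J -> {mpoly R[n]}) :
  (forall j, in_ideal f (g j)) -> forall p, in_ideal g p -> in_ideal f p.
Proof.
move=> gf p [c ->]; elim/big_rec: _ => [|j q _ [e ->]].
  by exists (fun _ => 0); rewrite big1 // => i _; rewrite mul0r.
have [d ->] := gf j; exists (fun i => c j * d i + e i).
rewrite mulr_sumr -big_split; apply: eq_bigr => i _ /=.
by rewrite mulrDl mulrA.
Qed.

Lemma in_ideal_meval0 (x : 'I_n -> R) :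
  (forall i, (f i).@[x] = 0) -> forall p, in_ideal f p -> p.@[x] = 0.
Proof.
move=> fx0 p [c ->]; rewrite (big_morph _ (mevalD x) (meval0 x)) big1 // => i _.
by rewrite mevalM fx0 mulr0.
Qed.

End Ideals.

Section RateCoordinates.
Variables (n m : nat) (rxn : nat -> seq nat * seq nat) (k : 'I_m -> R).

Definition cmono_exp (y : seq nat) : 'X_{1..n.+1} :=
  (\sum_(j <- y) U_(inord j))%MM.

Lemma cmonoE y : cmono n y = 'X_[cmono_exp y].
Proof.
elim: y => [|j y IHy]; first by rewrite /cmono /cmono_exp !big_nil mpolyX0.
by rewrite /cmono /cmono_exp !big_cons mpolyXD -/(cmono n y) IHy.
Qed.

Definition rate (r : 'I_m) : {mpoly R[n.+1]} := k r *: cmono n (rxn r).1.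

Definition rate_comb (c : nat -> int) : {mpoly R[n.+1]} :=
  \sum_(r < m) rate r *~ c r.

Definition stoich (i r : nat) : int :=
  (count_mem i (rxn r).2)%:Z - (count_mem i (rxn r).1)%:Z.

Lemma mass_action_fE (i : 'I_n.+1) :
  mass_action_f (fun r : 'I_m => rxn r) k i = rate_comb (stoich i).
Proof.
apply: eq_bigr => r _.
by rewrite /rate /stoich scalerMzr -mulrzr intrB !pmulrn.
Qed.

(* Quantifying over [iota] rather than ordinals lets [vm_compute] decide it. *)
Definition factors_as (p q : nat) (N A G : nat -> nat -> int) : bool :=
  all (fun i => all (fun r => N i r == \sum_(0 <= j < q) A i j * G j r)
    (iota 0 m)) (iota 0 p).

Lemma in_ideal_of_factors p q N A G :
  factors_as p q N A G -> forall i, (i < p)%N ->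
  in_ideal (fun j : 'I_q => rate_comb (G j)) (rate_comb (N i)).
Proof.
move=> /allP NAG i ltip.
have /NAG /allP NAGi : i \in iota 0 p by rewrite mem_iota.
have NAGr (r : 'I_m) : N i r = \sum_(j < q) A i j * G j r.
  rewrite -(big_mkord xpredT (fun j => A i j * G j r)).
  by apply/eqP/NAGi; rewrite mem_iota /=.
exists (fun j : 'I_q => (A i j)%:~R); rewrite /rate_comb.
under eq_bigr => r _ do rewrite NAGr mulrz_sumr.
rewrite exchange_big; apply: eq_bigr => j _.
by rewrite mulrzl mulrz_suml; apply: eq_bigr => r _; rewrite mulrC mulrzA.
Qed.

Definition two_sources (c : nat -> int) : bool :=
  (size (undup [seq (rxn r).1 | r <- iota 0 m & c r != 0]) <= 2)%N.

Lemma rate_comb_binomial c : two_sources c -> is_binomial (rate_comb c).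
Proof.
rewrite /two_sources /is_binomial; set s := undup _ => s_le2.
have supp_s : {subset msupp (rate_comb c) <= map cmono_exp s}.
  move=> e /msupp_sum_le /flattenP [_ /mapP [r _ ->]].
  have [-> | cr0] := eqVneq (c r) 0; first by rewrite mulr0z msupp0.
  rewrite -scaler_int => /msuppZ_le /msuppZ_le.
  rewrite cmonoE msuppX inE => /eqP ->.
  apply: map_f; rewrite mem_undup; apply/mapP; exists (nat_of_ord r) => //.
  by rewrite mem_filter cr0 mem_iota /=.
apply: leq_trans s_le2; rewrite -(size_map cmono_exp).
exact: uniq_leq_size (msupp_uniq _) supp_s.
Qed.

Lemma rate_comb_meval0 c :
  (forall r : 'I_m, (rxn r).1 != [::]) -> (rate_comb c).@[fun _ => 0] = 0.
Proof.
move=> src_nonnil; rewrite (big_morph _ (mevalD _) (meval0 _)) big1 // => r _.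
rewrite -scaler_int /rate !mevalZ; case: (rxn r).1 (src_nonnil r) => // j y _.
by rewrite /cmono big_cons mevalM mevalXU mul0r !mulr0.
Qed.

End RateCoordinates.

Definition sparse (l : seq (nat * int)) (j : nat) : int :=
  \sum_(e <- l | e.1 == j) e.2.

Definition intermediate_row (a : nat) : seq (nat * int) :=
  [:: (a, 1); (a.+1, -1); (a.+2, -1)].

Definition link_row (a b : nat) : seq (nat * int) := [:: (a, 1); (b, -1)].

(* Row [j < 12] belongs to the intermediate species [12 + j], formed by reaction
   [a] and consumed by reactions [a.+1] and [a.+2] (indices 0-based). *)
Definition erk_binomial_rows : seq (seq (nat * int)) :=
  [:: intermediate_row 0; intermediate_row 6; intermediate_row 9;
      intermediate_row 18; intermediate_row 21; intermediate_row 3;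
      intermediate_row 12; intermediate_row 15; intermediate_row 24;
      intermediate_row 27; intermediate_row 30; intermediate_row 33;
      link_row 2 5; link_row 8 17; link_row 11 14;
      link_row 20 29; link_row 23 26; link_row 32 35].

Definition erk_binomial (j : nat) : nat -> int :=
  sparse (nth [::] erk_binomial_rows j).

(* Row [i] gives the coordinates of [f_i] on the binomials. *)
Definition erk_species_coords : seq (seq (nat * int)) :=
  [:: [:: (0, -1); (12, -1)];
      [:: (1, -1); (2, -1); (5, -1); (10, -1); (12, 1); (17, -1)];
      [:: (1, -1); (13, -1)];
      [:: (2, -1); (7, -1); (13, 1); (14, -1)];
      [:: (3, -1); (4, -1); (6, -1); (14, 1)];
      [:: (3, -1); (15, -1)];
      [:: (4, -1); (9, -1); (15, 1); (16, -1)];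
      [:: (8, -1); (10, -1); (16, 1)];
      [:: (0, -1)];
      [:: (5, -1)];
      [:: (6, -1); (7, -1); (8, -1); (9, -1)];
      [:: (11, -1)];
      [:: (0, 1)]; [:: (1, 1)]; [:: (2, 1)]; [:: (3, 1)]; [:: (4, 1)];
      [:: (5, 1)]; [:: (6, 1)]; [:: (7, 1)]; [:: (8, 1)]; [:: (9, 1)];
      [:: (10, 1)]; [:: (11, 1)];
      [:: (11, -1); (17, 1)]].

(* Row [j] gives the coordinates of the [j]-th binomial on the [f_i]. *)
Definition erk_binomial_coords : seq (seq (nat * int)) :=
  [:: [:: (12, 1)]; [:: (13, 1)]; [:: (14, 1)]; [:: (15, 1)];
      [:: (16, 1)]; [:: (17, 1)]; [:: (18, 1)]; [:: (19, 1)];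
      [:: (20, 1)]; [:: (21, 1)]; [:: (22, 1)]; [:: (23, 1)];
      [:: (0, -1); (12, -1)];
      [:: (2, -1); (13, -1)];
      [:: (4, 1); (15, 1); (16, 1); (18, 1)];
      [:: (5, -1); (15, -1)];
      [:: (7, 1); (20, 1); (22, 1)];
      [:: (23, 1); (24, 1)]].

Definition erk_rxn_nat (r : nat) : seq nat * seq nat :=
  nth ([::], [::]) erk_reactions r.

Lemma erk_stoich_factors :
  factors_as 36 25 18 (stoich erk_rxn_nat)
    (fun i => sparse (nth [::] erk_species_coords i)) erk_binomial.
Proof. by rewrite /factors_as /erk_binomial /sparse unlock; vm_compute. Qed.

Lemma erk_binomials_factor :
  factors_as 36 18 25 erk_binomial
    (fun j => sparse (nth [::] erk_binomial_coords j)) (stoich erk_rxn_nat).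
Proof. by rewrite /factors_as /erk_binomial /sparse unlock; vm_compute. Qed.

Lemma erk_binomials_two_sources (j : 'I_18) :
  two_sources 36 erk_rxn_nat (erk_binomial j).
Proof.
have: all (fun j => two_sources 36 erk_rxn_nat (erk_binomial j)) (iota 0 18).
  by rewrite /two_sources /erk_binomial /sparse unlock; vm_compute.
by move=> /allP /(_ j); rewrite mem_iota ltn_ord; apply.
Qed.

Lemma erk_sources_nonempty (r : 'I_36) : (erk_rxn_nat r).1 != [::].
Proof.
have: all (fun r => (erk_rxn_nat r).1 != [::]) (iota 0 36) by vm_compute.
by move=> /allP /(_ r); rewrite mem_iota ltn_ord; apply.
Qed.

(* The binomials generate the steady state ideal for arbitrary rate constants
   and the origin is a nonnegative zero. *)
Theorem mainTheorem5 (k : 'I_36 -> R) (hk : forall r, 0 < k r) :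
  toric_steady_states (erk_f k).
Proof.
pose rates := rate_comb 24 erk_rxn_nat k.
have erk_fE i : erk_f k i = rates (stoich erk_rxn_nat i).
  exact: mass_action_fE.
split.
  exists 18%N, (fun j : 'I_18 => rates (erk_binomial j)); split.
    by move=> j; apply: rate_comb_binomial; apply: erk_binomials_two_sources.
  move=> p; split; apply: in_ideal_trans => i.
    rewrite erk_fE.
    exact: (in_ideal_of_factors 24 erk_rxn_nat k erk_stoich_factors (ltn_ord i)).
  apply: in_ideal_trans
    (in_ideal_of_factors 24 erk_rxn_nat k erk_binomials_factor (ltn_ord i)).
  by move=> {}i; have := in_ideal_gen (erk_f k) i; rewrite erk_fE.
exists (fun _ => 0); split => //; apply: in_ideal_meval0 => i.
by rewrite erk_fE; apply: rate_comb_meval0; apply: erk_sources_nonempty.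
Qed.
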